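(* Let $n\ge2$ be an integer and $\lambda>0$, and let $\gamma(t)=(\omega(t),x(t),y(t))$, $t\in(S,T)$ the maximal interval of existence, be a solution with $\omega>0$ of the system $$\frac{d\omega}{dt}=x\omega,\qquad \frac{dx}{dt}=x^2-xy+n-1-\lambda\omega^2,\qquad \frac{dy}{dt}=xy-nx^2-\lambda\omega^2.$$ Suppose $x(t_0)>1$ and $\frac{dx}{dt}(t_0)>0$ at some $t_0\in(S,T)$. Then $\int_{t_0}^T\omega(\sigma)\,d\sigma<\infty$. *)

From Stdlib Require Import Reals.
From Coquelicot Require Import Coquelicot.
Open Scope R_scope.

Definition in_ival (S T : Rbar) (t : R) : Prop :=
  Rbar_lt S (Finite t) /\ Rbar_lt (Finite t) T.

Definition is_solution (n : nat) (lam : R) (S T : Rbar)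
  (w x y : R -> R) : Prop :=
  forall t, in_ival S T t ->
    is_derive w t (x t * w t) /\
    is_derive x t (x t ^ 2 - x t * y t + INR n - 1 - lam * w t ^ 2) /\
    is_derive y t (x t * y t - INR n * x t ^ 2 - lam * w t ^ 2).

Definition is_maximal_solution (n : nat) (lam : R) (S T : Rbar)
  (w x y : R -> R) : Prop :=
  Rbar_lt S T /\
  is_solution n lam S T w x y /\
  forall (S' T' : Rbar) (w' x' y' : R -> R),
    Rbar_le S' S -> Rbar_le T T' ->
    is_solution n lam S' T' w' x' y' ->
    (forall t, in_ival S T t -> w' t = w t /\ x' t = x t /\ y' t = y t) ->
    S' = S /\ T' = T.

(* Write Q = x y + lam w^2, so that x' = x^2 - Q + (n - 1).  Whenever x' vanishes
   while x > 1 we have x'' = (n - 1) x (x^2 - 1) > 0, so x' > 0 and x >= x(t0) > 1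
   on [t0, T).  If Q < -x^2/2 at some t1 >= t0, this persists (on the threshold
   the gap -(x^2/2 + Q) has derivative (n - 1) x (x^2 - 1) - y x' > 0, as y < 0
   there), and then (w/x)' = w (Q - (n - 1)) / x^2 <= -w/2.  Otherwise
   q = Q / x^2 >= -1/2 on [t0, T); convexity in Q gives x^3 q' <= -c x^4 with
   c = 1 - 1/x(t0)^2, so V = (w/x) exp ((2/c) (q + 1/2)) satisfies V' <= -w.
   Either way the integral of w plus a nonnegative V is nonincreasing. *)

From Stdlib Require Import Reals Lra Psatz Classical.
From Coquelicot Require Import Coquelicot.
Open Scope R_scope.

Lemma ball_R (c e u : R) : ball c e u <-> Rabs (u - c) < e.
Proof. reflexivity. Qed.

Lemma continuous_of_is_derive (f : R -> R) (t l : R) : is_derive f t l -> continuous f t.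
Proof.
  intros Hd; apply (ex_derive_continuous (K := R_AbsRing) (V := R_NormedModule)).
  exists l; exact Hd.
Qed.

Lemma Rbar_lt_of_le_lt (u t : R) (T : Rbar) : u <= t -> Rbar_lt t T -> Rbar_lt u T.
Proof. intros Hut HtT; apply (Rbar_le_lt_trans _ t); [simpl; lra | exact HtT]. Qed.

Lemma nondecreasing_of_derive_nonneg (f df : R -> R) (a b : R) : a <= b ->
  (forall t, a <= t <= b -> is_derive f t (df t)) ->
  (forall t, a <= t <= b -> 0 <= df t) -> f a <= f b.
Proof.
  intros Hab Hd Hpos.
  destruct (MVT_gen f a b df) as [c [Hc Hmvt]];
    rewrite ?Rmin_left, ?Rmax_right in * by lra.
  - intros t Ht; apply Hd; lra.
  - intros t Ht; apply continuity_pt_filterlim, (continuous_of_is_derive f t (df t)), Hd; lra.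
  - specialize (Hpos c Hc); nra.
Qed.

Lemma nonincreasing_of_derive_nonpos (f df : R -> R) (a b : R) : a <= b ->
  (forall t, a <= t <= b -> is_derive f t (df t)) ->
  (forall t, a <= t <= b -> df t <= 0) -> f b <= f a.
Proof.
  intros Hab Hd Hneg.
  enough (- f a <= - f b) by lra.
  apply (nondecreasing_of_derive_nonneg (fun t => - f t) (fun t => - df t)); auto.
  - intros t Ht; apply (is_derive_opp f), Hd; auto.
  - intros t Ht; specialize (Hneg t Ht); lra.
Qed.

Lemma is_derive_pos_at_left (g : R -> R) (t l : R) :
  is_derive g t l -> 0 < l -> at_left t (fun u => g u < g t).
Proof.
  intros Hd Hl.
  destruct (proj1 (is_derive_Reals g t l) Hd l Hl) as [d Hquot].
  exists d; intros u Hu Hut; simpl in u; apply ball_R in Hu.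
  specialize (Hquot (u - t) ltac:(lra) Hu).
  replace (t + (u - t)) with u in Hquot by ring.
  apply Rabs_lt_between' in Hquot.
  assert (Hq : 0 < (g u - g t) / (u - t)) by lra.
  unfold Rdiv in Hq.
  assert (Hinv : / (u - t) < 0) by (apply Rinv_lt_0_compat; lra).
  nra.
Qed.

Lemma continuous_locally_lt (g : R -> R) (t c : R) :
  continuous g t -> g t < c -> locally t (fun u => g u < c).
Proof. intros Hc Hlt; apply (Hc (fun v => v < c)), (open_Rbar_lt' (g t) c Hlt). Qed.

Lemma continuous_locally_gt (g : R -> R) (t c : R) :
  continuous g t -> c < g t -> locally t (fun u => c < g u).
Proof. intros Hc Hlt; apply (Hc (fun v => c < v)), (open_Rbar_gt' (g t) c Hlt). Qed.

Lemma positive_at_of_positive_before (g dg : R -> R) (a m : R) :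
  a < m -> is_derive g m (dg m) -> (g m = 0 -> 0 < dg m) ->
  (forall u, a <= u < m -> 0 < g u) -> 0 < g m.
Proof.
  intros Ham Hd Hzero Hbefore; apply NNPP; intros Hgm.
  assert (Hneg : at_left m (fun u => g u < 0)).
  { destruct (Req_dec (g m) 0) as [Hz|Hnz].
    - rewrite <- Hz; apply (is_derive_pos_at_left g m (dg m) Hd), Hzero, Hz.
    - apply filter_le_within, continuous_locally_lt; [|lra].
      exact (continuous_of_is_derive g m (dg m) Hd). }
  assert (Hgt : at_left m (fun u => a < u))
    by (apply filter_le_within, (continuous_locally_gt id); [apply continuous_id | exact Ham]).
  assert (Hlt : at_left m (fun u => u < m)) by (apply (filter_forall (F := locally m)); auto).
  destruct (filter_ex _ (filter_and _ _ (filter_and _ _ Hneg Hgt) Hlt)) as [u [[Hgu Hau] Hum]].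
  specialize (Hbefore u (conj (Rlt_le _ _ Hau) Hum)); lra.
Qed.

Lemma positive_of_barrier (g dg : R -> R) (a b : R) :
  (forall t, a <= t <= b -> is_derive g t (dg t)) ->
  0 < g a ->
  (forall t, a < t <= b -> (forall u, a <= u < t -> 0 < g u) -> g t = 0 -> 0 < dg t) ->
  forall t, a <= t <= b -> 0 < g t.
Proof.
  intros Hd Ha Hzero c Hc.
  set (E := fun s => a <= s <= b /\ forall u, a <= u <= s -> 0 < g u).
  assert (HEa : E a) by (split; [lra | intros u Hu; replace u with a by lra; auto]).
  destruct (completeness E (ex_intro _ b (fun s Hs => proj2 (proj1 Hs))) (ex_intro _ a HEa))
    as [m [Hub Hlub]].
  assert (Ham : a <= m) by (apply Hub, HEa).
  assert (Hmb : m <= b) by (apply Hlub; intros s Hs; apply Hs).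
  assert (Hbefore : forall u, a <= u < m -> 0 < g u).
  { intros u Hu; apply NNPP; intros Hgu.
    enough (m <= u) by lra.
    apply Hlub; intros s [Hs Hpos].
    destruct (Rle_or_lt s u) as [|Hus]; auto.
    exfalso; apply Hgu, Hpos; lra. }
  assert (Hm : 0 < g m).
  { destruct (Req_dec a m) as [<-|Hne]; [exact Ha|].
    apply (positive_at_of_positive_before g dg a m); [lra | apply Hd; lra | | exact Hbefore].
    intros Hz; apply Hzero; [lra | exact Hbefore | exact Hz]. }
  assert (Hmb_eq : m = b).
  { destruct (Req_dec m b) as [|Hne]; auto; exfalso.
    assert (Hcont : continuous g m) by (apply (continuous_of_is_derive g m (dg m)), Hd; lra).
    destruct (continuous_locally_gt g m 0 Hcont Hm) as [eps Heps].
    pose proof (cond_pos eps) as Heps0.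
    set (s := Rmin b (m + eps / 2)).
    assert (Hsb : s <= b) by apply Rmin_l.
    assert (Hsm : s <= m + eps / 2) by apply Rmin_r.
    assert (Hms : m < s) by (apply Rmin_glb_lt; lra).
    enough (Hs : E s) by (specialize (Hub s Hs); lra).
    split; [lra|].
    intros u Hu; destruct (Rlt_or_le u m); [apply Hbefore; lra|].
    apply Heps, ball_R, Rabs_lt_between'; lra. }
  destruct (Rlt_or_le c m); [apply Hbefore; lra|].
  replace c with m by lra; exact Hm.
Qed.

Lemma in_ival_between (S T : Rbar) (a b t : R) :
  in_ival S T a -> in_ival S T b -> a <= t <= b -> in_ival S T t.
Proof.
  intros [HSa _] [_ HbT] Ht; split.
  - apply (Rbar_lt_le_trans _ a); [exact HSa | simpl; lra].
  - apply (Rbar_lt_of_le_lt t b); [lra | exact HbT].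
Qed.

Lemma in_ival_after (S T : Rbar) (a t : R) :
  in_ival S T a -> a <= t -> Rbar_lt t T -> in_ival S T t.
Proof.
  intros [HSa _] Hat HtT; split; [|exact HtT].
  apply (Rbar_lt_le_trans _ a); [exact HSa | simpl; lra].
Qed.

Lemma locally_in_ival (S T : Rbar) (t : R) : in_ival S T t -> locally t (in_ival S T).
Proof.
  intros [HSt HtT]; apply filter_and;
    [exact (open_Rbar_gt' t S HSt) | exact (open_Rbar_lt' t T HtT)].
Qed.

Lemma is_derive_RInt_in_ival (S T : Rbar) (w : R -> R) (a t : R) :
  (forall u, in_ival S T u -> continuous w u) ->
  in_ival S T a -> in_ival S T t -> is_derive (RInt w a) t (w t).
Proof.
  intros Hw Ha Ht; apply (is_derive_RInt w (RInt w a) a t); [|apply Hw, Ht].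
  apply (filter_imp (in_ival S T)); [|apply locally_in_ival, Ht].
  intros b Hb; apply (RInt_correct (V := R_CompleteNormedModule)), ex_RInt_continuous.
  intros u Hu; apply Hw, (in_ival_between S T (Rmin a b) (Rmax a b)); auto;
    [apply Rmin_case | apply Rmax_case]; auto.
Qed.

Lemma RInt_bounded_of_Lyapunov (S T : Rbar) (w V dV : R -> R) (a t1 : R) :
  in_ival S T a -> a <= t1 -> Rbar_lt t1 T ->
  (forall t, in_ival S T t -> continuous w t /\ 0 <= w t) ->
  (forall t, t1 <= t -> Rbar_lt t T -> is_derive V t (dV t) /\ dV t <= - w t) ->
  (forall t, t1 <= t -> Rbar_lt t T -> 0 <= V t) ->
  exists M, forall t, a <= t -> Rbar_lt t T -> RInt w a t <= M.
Proof.
  intros Ha Hat1 Ht1T Hw HdV HV.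
  assert (HI : forall t, a <= t -> Rbar_lt t T -> in_ival S T t)
    by (intros t; apply in_ival_after; auto).
  assert (HdI : forall t, a <= t -> Rbar_lt t T -> is_derive (RInt w a) t (w t)).
  { intros t Hat HtT; apply (is_derive_RInt_in_ival S T); auto; intros u Hu; apply Hw, Hu. }
  exists (RInt w a t1 + V t1); intros t Hat HtT.
  destruct (Rle_or_lt t1 t) as [Ht1t | Htt1].
  - assert (HT : forall u, t1 <= u <= t -> Rbar_lt u T)
      by (intros u Hu; apply (Rbar_lt_of_le_lt u t); [lra | exact HtT]).
    enough (RInt w a t + V t <= RInt w a t1 + V t1) by (specialize (HV t Ht1t HtT); lra).
    apply (nonincreasing_of_derive_nonpos (fun u => RInt w a u + V u) (fun u => w u + dV u));
      auto; intros u Hu.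
    + apply (is_derive_plus (RInt w a) V); [apply HdI | apply HdV]; auto; lra.
    + destruct (HdV u ltac:(lra) (HT u Hu)); lra.
  - enough (RInt w a t <= RInt w a t1) by (specialize (HV t1 (Rle_refl _) Ht1T); lra).
    assert (HT : forall u, t <= u <= t1 -> Rbar_lt u T)
      by (intros u Hu; apply (Rbar_lt_of_le_lt u t1); [lra | exact Ht1T]).
    apply (nondecreasing_of_derive_nonneg (RInt w a) w); [lra | |]; intros u Hu.
    + apply HdI; [lra | auto].
    + apply Hw, HI; [lra | auto].
Qed.

Lemma quadratic_bound (m u c Q L : R) :
  1 <= m -> 1 <= u -> 0 <= c -> c * u <= u - 1 -> 0 <= L -> - u / 2 <= Q < u + m ->
  Q ^ 2 - m * Q - (m + 1) * u ^ 2 + L * (Q - u - m) <= - c * u ^ 2.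
Proof.
  intros Hm Hu Hc Hcu HL [HQl HQr].
  (* Drop the L-term, then bound the convex part by its chord over [-u/2, u + m]. *)
  assert (Hseg : (Q + u / 2) * (Q - (u + m)) <= 0) by nra.
  assert (HLQ : L * (Q - u - m) <= 0) by nra.
  assert (HuQ : u * Q <= u * (u + m)) by nra.
  assert (Hcu2 : c * u ^ 2 <= u * (u - 1)) by nra.
  assert (Hmu : u * (u - 1) <= m * (u * (u - 1))) by (assert (0 <= u * (u - 1)) by nra; nra).
  nra.
Qed.

Lemma Lyapunov_slope_le (E W u A B : R) :
  1 <= E -> 0 < W -> 0 < u -> A < u -> B <= -2 * u ^ 2 -> E * W / u * (A + B / u) <= - W.
Proof.
  intros HE HW Hu HA HB.
  assert (HBu : B / u <= -2 * u).
  { apply (Rmult_le_reg_r u); [lra|].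
    unfold Rdiv; rewrite Rmult_assoc, Rinv_l; nra. }
  assert (HEWu : 0 < E * W / u) by (apply Rdiv_lt_0_compat; nra).
  replace (- W) with (E * W / u * (- u) + (E - 1) * W) by (field; lra).
  nra.
Qed.

Section Flow.
Variables (n : nat) (lam : R) (w x y : R -> R).

Definition xdot (t : R) : R := x t ^ 2 - x t * y t + INR n - 1 - lam * w t ^ 2.
Definition ydot (t : R) : R := x t * y t - INR n * x t ^ 2 - lam * w t ^ 2.
Definition Q (t : R) : R := x t * y t + lam * w t ^ 2.
Definition Qdot (t : R) : R := xdot t * y t + x t * ydot t + 2 * lam * x t * w t ^ 2.

Lemma xdot_Q (t : R) : xdot t = x t ^ 2 - Q t + (INR n - 1).
Proof. unfold xdot, Q; ring. Qed.

Section AtPoint.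
Variable t : R.
Hypotheses (Hw : is_derive w t (x t * w t)) (Hx : is_derive x t (xdot t))
  (Hy : is_derive y t (ydot t)).

Ltac derive_along_flow :=
  auto_derive;
  [ repeat split;
    first [exact (ex_intro _ _ Hw) | exact (ex_intro _ _ Hx) | exact (ex_intro _ _ Hy) | assumption]
  | replace (Derive (fun s => w s) t) with (x t * w t) by (symmetry; apply is_derive_unique, Hw);
    replace (Derive (fun s => x s) t) with (xdot t) by (symmetry; apply is_derive_unique, Hx);
    replace (Derive (fun s => y s) t) with (ydot t) by (symmetry; apply is_derive_unique, Hy);
    unfold Qdot, Q, xdot, ydot ].

Lemma is_derive_xdot :
  is_derive xdot t ((3 * x t - y t) * xdot t + (INR n - 1) * x t * (x t ^ 2 - 1)).
Proof. unfold xdot at 1; derive_along_flow; ring. Qed.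

Lemma is_derive_Q : is_derive Q t (Qdot t).
Proof. unfold Q at 1; derive_along_flow; ring. Qed.

Lemma is_derive_threshold_gap :
  is_derive (fun s => - (x s ^ 2 / 2 + Q s)) t ((INR n - 1) * x t * (x t ^ 2 - 1) - y t * xdot t).
Proof. unfold Q; derive_along_flow; field. Qed.

Lemma is_derive_ratio : x t <> 0 ->
  is_derive (fun s => w s / x s) t (w t * (Q t - (INR n - 1)) / x t ^ 2).
Proof. intros Hx0; derive_along_flow; field; exact Hx0. Qed.

Lemma is_derive_Lyapunov (beta : R) : x t <> 0 ->
  is_derive (fun s => w s / x s * exp (beta * (Q s / x s ^ 2 + 1 / 2))) t
    (exp (beta * (Q t / x t ^ 2 + 1 / 2)) * w t / x t ^ 2 *
     (Q t - (INR n - 1) + beta * (Qdot t * x t - 2 * Q t * xdot t) / x t ^ 2)).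
Proof.
  intros Hx0; pose proof is_derive_Q as HQ.
  auto_derive.
  - repeat split; first [exact (ex_intro _ _ Hw) | exact (ex_intro _ _ Hx)
      | exact (ex_intro _ _ HQ) | exact Hx0 | exact (pow_nonzero _ 2 Hx0)].
  - change (Q t * / (x t * (x t * 1))) with (Q t / x t ^ 2).
    replace (Derive (fun s => w s) t) with (x t * w t) by (symmetry; apply is_derive_unique, Hw).
    replace (Derive (fun s => x s) t) with (xdot t) by (symmetry; apply is_derive_unique, Hx).
    replace (Derive (fun s => Q s) t) with (Qdot t) by (symmetry; apply is_derive_unique, HQ).
    rewrite xdot_Q; field; exact Hx0.
Qed.
End AtPoint.

(* The left-hand side is x^3 times the derivative of Q / x^2. *)
Lemma Q_ratio_numerator_eq (t : R) :
  Qdot t * x t - 2 * Q t * xdot t =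
  Q t ^ 2 - (INR n - 1) * Q t - INR n * (x t ^ 2) ^ 2
  + lam * w t ^ 2 * (Q t - x t ^ 2 - (INR n - 1)).
Proof. unfold Qdot, Q, xdot, ydot; ring. Qed.

Section Solution.
Variables (S T : Rbar) (t0 : R).
Hypotheses (Hn : 1 <= INR n - 1) (Hlam : 0 < lam) (Hsol : is_solution n lam S T w x y)
  (Hwpos : forall t, in_ival S T t -> 0 < w t) (Ht0 : in_ival S T t0)
  (Hx0 : 1 < x t0) (Hxdot0 : 0 < xdot t0).

Lemma in_ival_from_t0 (t u : R) : t0 <= u <= t -> Rbar_lt t T -> in_ival S T u.
Proof.
  intros Hu HtT; apply (in_ival_after S T t0); [exact Ht0 | lra |].
  apply (Rbar_lt_of_le_lt u t); [lra | exact HtT].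
Qed.

Lemma w_continuous_nonneg (t : R) : in_ival S T t -> continuous w t /\ 0 <= w t.
Proof.
  intros Ht; split; [|apply Rlt_le, Hwpos, Ht].
  apply (continuous_of_is_derive w t (x t * w t)), Hsol, Ht.
Qed.

Lemma x_ge_x0_while_xdot_nonneg (t : R) : t0 <= t -> Rbar_lt t T ->
  (forall u, t0 <= u <= t -> 0 <= xdot u) -> x t0 <= x t.
Proof.
  intros Ht HtT Hpos; apply (nondecreasing_of_derive_nonneg x xdot); auto.
  intros u Hu; apply (Hsol u (in_ival_from_t0 t u Hu HtT)).
Qed.

Lemma xdot_pos (t : R) : t0 <= t -> Rbar_lt t T -> 0 < xdot t.
Proof.
  intros Ht HtT.
  apply (positive_of_barrier xdot
    (fun u => (3 * x u - y u) * xdot u + (INR n - 1) * x u * (x u ^ 2 - 1)) t0 t);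
    [| exact Hxdot0 | | lra].
  - intros u Hu; destruct (Hsol u (in_ival_from_t0 t u Hu HtT)) as [Hw [Hx Hy]].
    apply is_derive_xdot; auto.
  - intros tau Htau Hpos Hzero; rewrite Hzero.
    assert (Hx : x t0 <= x tau).
    { apply x_ge_x0_while_xdot_nonneg; [lra | apply (Rbar_lt_of_le_lt tau t); [lra | exact HtT] |].
      intros u Hu; destruct (Req_dec u tau) as [->|]; [lra | apply Rlt_le, Hpos; lra]. }
    assert (Hsq : 0 < x tau ^ 2 - 1) by nra.
    assert (0 < (INR n - 1) * x tau) by (apply Rmult_lt_0_compat; lra).
    nra.
Qed.

Lemma x_ge_x0 (t : R) : t0 <= t -> Rbar_lt t T -> x t0 <= x t.
Proof.
  intros Ht HtT; apply x_ge_x0_while_xdot_nonneg; auto.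
  intros u Hu; apply Rlt_le, xdot_pos; [lra|].
  apply (Rbar_lt_of_le_lt u t); [lra | exact HtT].
Qed.

Lemma x_gt_1 (t : R) : t0 <= t -> Rbar_lt t T -> 1 < x t.
Proof. intros Ht HtT; pose proof (x_ge_x0 t Ht HtT); lra. Qed.

Lemma Q_below_threshold_persists (t1 : R) : t0 <= t1 ->  Q t1 < - x t1 ^ 2 / 2 ->
  forall t, t1 <= t -> Rbar_lt t T -> Q t < - x t ^ 2 / 2.
Proof.
  intros Ht1 HQ1 t Ht HtT.
  enough (0 < - (x t ^ 2 / 2 + Q t)) by lra.
  apply (positive_of_barrier (fun s => - (x s ^ 2 / 2 + Q s))
    (fun s => (INR n - 1) * x s * (x s ^ 2 - 1) - y s * xdot s) t1 t); [| lra | | lra].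
  - intros u Hu; destruct (Hsol u (in_ival_from_t0 t u ltac:(lra) HtT)) as [Hw [Hx Hy]].
    apply is_derive_threshold_gap; auto.
  - intros tau Htau _ Hzero.
    assert (HtauT : Rbar_lt tau T) by (apply (Rbar_lt_of_le_lt tau t); [lra | exact HtT]).
    assert (Hx : 1 < x tau) by (apply x_gt_1; auto; lra).
    assert (Hxd : 0 < xdot tau) by (apply xdot_pos; auto; lra).
    assert (Hw : 0 < lam * w tau ^ 2)
      by (apply Rmult_lt_0_compat, pow_lt, Hwpos, (in_ival_from_t0 t); auto; lra).
    assert (Hy : y tau < 0).
    { assert (x tau * y tau < 0) by (unfold Q in Hzero; nra). nra. }
    assert (0 < (INR n - 1) * x tau * (x tau ^ 2 - 1))
      by (apply Rmult_lt_0_compat; [apply Rmult_lt_0_compat|]; nra).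
    nra.
Qed.

Lemma RInt_w_bounded_below_threshold (t1 : R) : t0 <= t1 -> Rbar_lt t1 T ->
  Q t1 < - x t1 ^ 2 / 2 ->
  exists M, forall t, t0 <= t -> Rbar_lt t T -> RInt w t0 t <= M.
Proof.
  intros Ht1 Ht1T HQ1.
  apply (RInt_bounded_of_Lyapunov S T w (fun s => 2 * (w s / x s))
    (fun s => 2 * (w s * (Q s - (INR n - 1)) / x s ^ 2)) t0 t1); auto;
    [exact w_continuous_nonneg | |]; intros t Ht HtT;
    assert (Hx : 1 < x t) by (apply x_gt_1; auto; lra);
    assert (Hw : 0 < w t) by (apply Hwpos, (in_ival_from_t0 t); auto; lra).
  - destruct (Hsol t (in_ival_from_t0 t t ltac:(lra) HtT)) as [Hwd [Hxd Hyd]].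
    split; [apply (is_derive_scal (fun s => w s / x s) t 2), is_derive_ratio; auto; lra|].
    assert (HQ : Q t < - x t ^ 2 / 2) by (apply (Q_below_threshold_persists t1); auto).
    assert (Hx2 : 0 < x t ^ 2) by nra.
    assert (Hfrac : 2 * (Q t - (INR n - 1)) / x t ^ 2 <= -1).
    { apply (Rmult_le_reg_r (x t ^ 2)); [lra|].
      unfold Rdiv; rewrite Rmult_assoc, Rinv_l; lra. }
    replace (2 * (w t * (Q t - (INR n - 1)) / x t ^ 2))
      with (w t * (2 * (Q t - (INR n - 1)) / x t ^ 2)) by (field; lra).
    nra.
  - apply Rmult_le_pos; [lra | apply Rlt_le, Rdiv_lt_0_compat; lra].
Qed.

Lemma Lyapunov_slope_above_threshold (c t : R) : 0 < c -> c * x t ^ 2 <= x t ^ 2 - 1 ->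
  t0 <= t -> Rbar_lt t T -> - x t ^ 2 / 2 <= Q t ->
  exp (2 / c * (Q t / x t ^ 2 + 1 / 2)) * w t / x t ^ 2 *
    (Q t - (INR n - 1) + 2 / c * (Qdot t * x t - 2 * Q t * xdot t) / x t ^ 2) <= - w t.
Proof.
  intros Hc Hcu Ht HtT HQ.
  assert (Hx : 1 < x t) by (apply x_gt_1; auto).
  assert (Hw : 0 < w t) by (apply Hwpos, (in_ival_from_t0 t); auto; lra).
  assert (Hxd : 0 < xdot t) by (apply xdot_pos; auto).
  rewrite xdot_Q in Hxd.
  assert (HL : 0 <= lam * w t ^ 2) by (apply Rmult_le_pos; [lra | apply pow_le; lra]).
  set (u := x t ^ 2) in *.
  assert (Hu : 1 < u) by (unfold u; nra).
  assert (HP : Qdot t * x t - 2 * Q t * xdot t <= - c * u ^ 2).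
  { assert (Hq : Q t ^ 2 - (INR n - 1) * Q t - (INR n - 1 + 1) * u ^ 2
                 + lam * w t ^ 2 * (Q t - u - (INR n - 1)) <= - c * u ^ 2)
      by (apply quadratic_bound; lra).
    rewrite Q_ratio_numerator_eq; fold u; lra. }
  assert (HE : 1 <= exp (2 / c * (Q t / u + 1 / 2))).
  { enough (0 <= 2 / c * (Q t / u + 1 / 2))
      by (pose proof (exp_ineq1_le (2 / c * (Q t / u + 1 / 2))); lra).
    apply Rmult_le_pos; [apply Rlt_le, Rdiv_lt_0_compat; lra|].
    enough (- (1 / 2) <= Q t / u) by lra.
    apply (Rmult_le_reg_r u); [lra|].
    unfold Rdiv; rewrite Rmult_assoc, Rinv_l; lra. }
  apply Lyapunov_slope_le; [exact HE | exact Hw | lra | lra |].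
  replace (-2 * u ^ 2) with (2 / c * (- c * u ^ 2)) by (field; lra).
  apply Rmult_le_compat_l; [apply Rlt_le, Rdiv_lt_0_compat|]; lra.
Qed.

Lemma RInt_w_bounded_above_threshold :
  (forall t, t0 <= t -> Rbar_lt t T -> - x t ^ 2 / 2 <= Q t) ->
  exists M, forall t, t0 <= t -> Rbar_lt t T -> RInt w t0 t <= M.
Proof.
  intros HQ.
  set (u0 := x t0 ^ 2).
  assert (Hu0 : 1 < u0) by (unfold u0; nra).
  set (c := (u0 - 1) / u0).
  assert (Hc : 0 < c) by (apply Rdiv_lt_0_compat; lra).
  apply (RInt_bounded_of_Lyapunov S T w
    (fun s => w s / x s * exp (2 / c * (Q s / x s ^ 2 + 1 / 2)))
    (fun s => exp (2 / c * (Q s / x s ^ 2 + 1 / 2)) * w s / x s ^ 2 *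
       (Q s - (INR n - 1) + 2 / c * (Qdot s * x s - 2 * Q s * xdot s) / x s ^ 2)) t0 t0);
    [exact Ht0 | lra | apply Ht0 | exact w_continuous_nonneg | |]; intros t Ht HtT;
    assert (Hx : x t0 <= x t) by (apply x_ge_x0; auto).
  - destruct (Hsol t (in_ival_from_t0 t t ltac:(lra) HtT)) as [Hwd [Hxd Hyd]].
    split; [apply is_derive_Lyapunov; auto; lra|].
    apply Lyapunov_slope_above_threshold; auto.
    replace (c * x t ^ 2) with (x t ^ 2 - x t ^ 2 / u0) by (unfold c; field; lra).
    enough (1 <= x t ^ 2 / u0) by lra.
    apply (Rmult_le_reg_r u0); [lra|].
    unfold Rdiv; rewrite Rmult_assoc, Rinv_l; unfold u0 in *; nra.
  - assert (Hw : 0 < w t) by (apply Hwpos, (in_ival_from_t0 t); auto; lra).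
    apply Rmult_le_pos; [apply Rlt_le, Rdiv_lt_0_compat; lra | apply Rlt_le, exp_pos].
Qed.

Lemma RInt_w_bounded : exists M, forall t, t0 <= t -> Rbar_lt t T -> RInt w t0 t <= M.
Proof.
  destruct (classic (exists t1, t0 <= t1 /\ Rbar_lt t1 T /\ Q t1 < - x t1 ^ 2 / 2))
    as [[t1 [Ht1 [Ht1T HQ1]]] | Hnever].
  - exact (RInt_w_bounded_below_threshold t1 Ht1 Ht1T HQ1).
  - apply RInt_w_bounded_above_threshold; intros t Ht HtT.
    apply Rnot_lt_le; intros HQ; apply Hnever; eauto.
Qed.
End Solution.
End Flow.

Theorem lemma3p7 (n : nat) (lam : R) (S T : Rbar) (w x y : R -> R) (t0 : R) :
  (2 <= n)%nat -> 0 < lam ->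
  is_maximal_solution n lam S T w x y ->
  (forall t, in_ival S T t -> 0 < w t) ->
  in_ival S T t0 ->
  1 < x t0 -> 0 < Derive x t0 ->
  exists M : R, forall t, t0 <= t -> Rbar_lt (Finite t) T -> RInt w t0 t <= M.
Proof.
  intros Hn Hlam [_ [Hsol _]] Hwpos Ht0 Hx0 Hdx0.
  apply (RInt_w_bounded n lam w x y S T t0); auto.
  - apply le_INR in Hn; simpl in Hn; lra.
  - rewrite <- (is_derive_unique x t0 (xdot n lam w x y t0)); [exact Hdx0 | apply Hsol, Ht0].
Qed.
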